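(* Consider the noiseless least squares deterministic dynamics under AdaGrad-Norm$(b,\eta)$ described in the context, in the regime $d\to\infty$. Assume that, for some $C>0$, the number of eigenvalues of $K$ below $C$ is $o(d)$, that $\langle X^\star,\omega_i\rangle=O(d^{-1/2})$ for all $i$, and that $X_0=0$. Then there exists some $\tilde\gamma>0$ such that $\gamma_t>\tilde\gamma$ for all $t>0$.
   Context: Noiseless least squares: $\mathcal R(X)=\frac12(X-X^\star)^TK(X-X^\star)$, $K\in\mathbb R^{d\times d}$ positive semidefinite with $\|K\|_{op}$ bounded independently of $d$, eigenpairs $(\lambda_i,\omega_i)$. Deterministic dynamics: $D_i^2(0)=d\langle X_0-X^\star,\omega_i\rangle^2$, $\frac{d}{dt}D_i^2(t)=-2\gamma_t\lambda_iD_i^2(t)+2\gamma_t^2\lambda_iR(t)$, $R(t)=\frac1{2d}\sum_i\lambda_iD_i^2(t)$, with AdaGrad-Norm learning rate $\gamma_t=\eta\big/\sqrt{b^2+\frac{2\mathrm{Tr}(K)}{d}\int_0^tR(s)\,ds}$, $b,\eta>0$. *)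

From Stdlib Require Import Reals.
From Coquelicot Require Import Coquelicot.
From mathcomp Require Import all_boot all_algebra.
From mathcomp Require Import Rstruct.
Set Implicit Arguments. Unset Strict Implicit. Unset Printing Implicit Defensive.
Import GRing.Theory Num.Theory.
Local Open Scope ring_scope.

Definition eig_coord (d : nat) (Om : 'M[R]_d) (v : 'cV[R]_d) (i : 'I_d) : R :=
  (row i Om *m v) ord0 ord0.

Definition risk (d : nat) (lam : 'I_d -> R) (D2 : 'I_d -> R -> R) (t : R) : R :=
  (2 * d%:R)^-1 * \sum_(i < d) lam i * D2 i t.

Definition adagrad_lr (b eta : R) (d : nat) (K : 'M[R]_d) (Rf : R -> R) (t : R) : R :=
  eta / sqrt (b ^+ 2 + 2 * \tr K / d%:R * RInt Rf 0 t).

(* Along the flow, the quantity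
     Phi = sigma Q + 4 eta sqrt G - sigma eta^2 ln G,
   where sigma = Tr K / d, Q = (1/d) sum_i D_i^2 and G = b^2 + 2 sigma int_0^t R
   is the squared denominator of gamma_t, is conserved.  A barrier argument on
   D_i^2 + eps e^(kappa t) shows that the D_i^2 stay nonnegative, so Q >= 0; moreover
   sigma <= ||K||_op and Q(0) = O(1) because <X*, omega_i> = O(d^(-1/2)).  Conservation
   then bounds sqrt G by a constant independent of d and t, that is,
   gamma_t = eta / sqrt G stays bounded away from 0. *)

From Stdlib Require Import Reals Lra Classical.
From Coquelicot Require Import Coquelicot.
From mathcomp Require Import all_boot all_algebra.
From mathcomp Require Import Rstruct.
Set Implicit Arguments. Unset Strict Implicit. Unset Printing Implicit Defensive.
Import GRing.Theory Num.Theory.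

Open Scope R_scope.

(** * Continuous families crossing a barrier *)

Lemma locally_Rabs (x : R) (P : R -> Prop) (e : R) :
  0 < e -> (forall y, Rabs (y - x) < e -> P y) -> locally x P.
Proof. by move=> e0 HP; exists (mkposreal e e0) => y /HP. Qed.

Lemma continuous_Rmin (f g : R -> R) (x : R) :
  continuous f x -> continuous g x -> continuous (fun y => Rmin (f y) (g y)) x.
Proof.
move=> cf cg.
have minE y : (f y + g y - Rabs (f y - g y)) / 2 = Rmin (f y) (g y).
  rewrite /Rmin; case: Rle_dec => h.
  - by rewrite Rabs_left1; lra.
  - by rewrite Rabs_right; lra.
apply: (continuous_ext _ _ _ minE).
apply: (continuous_scal_l _ (/ 2)).
apply: continuous_minus; first exact: continuous_plus.
apply: continuous_Rabs_comp; exact: continuous_minus.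
Qed.

Lemma continuous_pos_near (h : R -> R) (m : R) : continuous h m -> 0 < h m ->
  exists2 del, 0 < del & forall y, Rabs (y - m) < del -> 0 < h y.
Proof.
move/filterlim_locally=> hm hm0.
case: (hm (mkposreal _ hm0)) => del Hdel; exists del; first exact: cond_pos.
move=> y /Hdel; rewrite /ball /= /AbsRing_ball /abs /minus /plus /Hierarchy.opp /=.
by move=> /Rabs_def2; lra.
Qed.

Lemma continuous_neg_near (h : R -> R) (m : R) : continuous h m -> h m < 0 ->
  exists2 del, 0 < del & forall y, Rabs (y - m) < del -> h y < 0.
Proof.
move=> /continuous_opp ch hm.
have [del del0 Hdel] := @continuous_pos_near (fun x => - h x) m ch ltac:(lra).
by exists del => // y /Hdel; lra.
Qed.

Lemma first_root (h : R -> R) (T : R) : (forall x, continuous h x) -> 0 < h 0 ->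
  (exists2 s, 0 <= s <= T & h s <= 0) ->
  exists t, [/\ 0 < t <= T, h t = 0 & forall s, 0 <= s < t -> 0 < h s].
Proof.
move=> ch h0 [s0 s0T hs0].
pose E x := 0 <= x <= T /\ forall s, 0 <= s <= x -> 0 < h s.
have E0 : E 0 by split=> [|s s0']; [lra | have -> : s = 0 by lra].
have [|m [m_ub m_lub]] := completeness E _ (ex_intro _ 0 E0).
  by exists T => x [[_ xT] _].
have m0 : 0 <= m by exact: m_ub.
have mT : m <= T by apply: m_lub => x [[_ xT] _].
have pos_before s : 0 <= s < m -> 0 < h s.
  move=> Hs; case: (classic (exists x, E x /\ s < x)) => [[x [[_ Hx] sx]]|nE].
    by apply: Hx; lra.
  suff : m <= s by lra.
  apply: m_lub => x Ex; case: (Rle_dec x s) => // /Rnot_le_lt xs.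
  by case: nE; exists x.
have hm_ge0 : 0 <= h m.
  case: (Rle_dec 0 (h m)) => // /Rnot_le_lt hm.
  have [del del0 Hdel] := continuous_neg_near (ch m) hm.
  have mpos : 0 < m by case: (Req_dec m 0) => [m_eq|]; [rewrite m_eq in hm|]; lra.
  have s1 : 0 <= Rmax 0 (m - del / 2) < m.
    by split; [apply: Rmax_l | apply: Rmax_lub_lt; lra].
  have : Rabs (Rmax 0 (m - del / 2) - m) < del.
    by rewrite Rabs_left1; have := Rmax_r 0 (m - del / 2); lra.
  by move/Hdel; have := pos_before _ s1; lra.
have hm_le0 : h m <= 0.
  case: (Rle_dec (h m) 0) => // /Rnot_le_lt hm.
  have upto_m s : 0 <= s <= m -> 0 < h s.
    by move=> Hs; case: (Req_dec s m) => [->|sm] //; apply: pos_before; lra.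
  have mT' : m < T by case: (Req_dec m T) => [mT'|]; [have := upto_m s0; lra | lra].
  have [del del0 Hdel] := continuous_pos_near (ch m) hm.
  pose x := Rmin T (m + del / 2).
  have xm : m < x by apply: Rmin_glb_lt; lra.
  suff /m_ub : E x by lra.
  split; first by split; [lra | apply: Rmin_l].
  move=> s Hs; case: (Rle_dec s m) => sm; first by apply: upto_m; lra.
  apply: Hdel; rewrite Rabs_right; have := Rmin_r T (m + del / 2); rewrite -/x; lra.
exists m; split=> //; last lra.
by split=> //; case: (Req_dec m 0) => [m_eq|]; [have : h m = h 0 by rewrite m_eq|]; lra.
Qed.

Lemma is_derive_le0_at_first_root (f : R -> R) (t a l : R) :
  is_derive f t l -> f t = 0 -> a < t -> (forall s, a < s < t -> 0 < f s) -> l <= 0.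
Proof.
move=> /is_derive_Reals df ft0 at_ fpos.
case: (Rle_dec l 0) => // /Rnot_le_lt l0.
have [del Hdel] := df (l / 2) ltac:(lra).
have del0 := cond_pos del.
pose k := - Rmin del (t - a) / 2.
have min_pos : 0 < Rmin del (t - a) by apply: Rmin_glb_lt; lra.
have k_lt0 : k < 0 by rewrite /k; lra.
have k_del : Rabs k < del by rewrite /k Rabs_left; have := Rmin_l del (t - a); lra.
have k_at : a < t + k < t by rewrite /k; have := Rmin_r del (t - a); lra.
have /Rabs_def2 [_] := Hdel k ltac:(lra) k_del.
rewrite ft0 Rminus_0_r => slope.
have := Rdiv_pos_neg _ _ (fpos _ k_at) k_lt0; lra.
Qed.

(* Extending by the value at 0 turns a solution on [0, oo) that is only right-continuous
   at 0 into a function continuous on all of R, as Coquelicot's MVT and RInt lemmas need. *)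
Definition extend0 (f : R -> R) (x : R) : R := f (Rmax x 0).

Lemma extend0E (f : R -> R) (x : R) : 0 <= x -> extend0 f x = f x.
Proof. by move=> x0; rewrite /extend0 Rmax_left. Qed.

Lemma extend0_near (f : R -> R) (x : R) : 0 < x ->
  locally x (fun y => f y = extend0 f y).
Proof.
move=> x0; apply: (locally_Rabs x0) => y /Rabs_def2 [? ?].
by rewrite extend0E //; lra.
Qed.

Lemma is_derive_extend0 (f : R -> R) (x l : R) : 0 < x ->
  is_derive f x l -> is_derive (extend0 f) x l.
Proof. by move=> x0; apply: is_derive_ext_loc; exact: extend0_near. Qed.

Lemma continuous_extend0 (f : R -> R) :
  filterlim f (at_right 0) (locally (f 0)) ->
  (forall t, 0 < t -> continuous f t) -> forall x, continuous (extend0 f) x.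
Proof.
move=> f_right fc x; case: (Rtotal_order x 0) => [x0|[->|x0]].
- apply: (continuous_ext_loc _ (fun _ => f 0)); last exact: continuous_const.
  apply: (@locally_Rabs _ _ (- x)); first lra.
  by move=> y /Rabs_def2 [? ?]; rewrite /extend0 Rmax_right //; lra.
- apply/filterlim_locally => eps.
  have [del Hdel] := proj1 (filterlim_locally _ _) f_right eps.
  exists del => y y0; rewrite /extend0 Rmax_left; last lra.
  case: (Rle_dec y 0) => y_le0.
    by rewrite Rmax_right //; exact: ball_center.
  by rewrite Rmax_left; [apply: Hdel => //; lra | lra].
- apply: (continuous_ext_loc _ f); last exact: fc.
  apply: filter_imp (extend0_near f x0) => y ->; done.
Qed.

Lemma is_derive_big_sum (I : Type) (r : seq I) (F : I -> R -> R) (F' : I -> R) (t : R) :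
  (forall i, is_derive (F i) t (F' i)) ->
  is_derive (fun x => (\sum_(i <- r) F i x)%R) t (\sum_(i <- r) F' i)%R.
Proof.
move=> dF; elim: r => [|a r IH].
  apply: (is_derive_ext (fun _ => 0)); first by move=> x; rewrite big_nil.
  by rewrite big_nil; exact: is_derive_const.
apply: (is_derive_ext (fun x => F a x + (\sum_(i <- r) F i x)%R)).
  by move=> x; rewrite big_cons.
by rewrite big_cons; exact: is_derive_plus.
Qed.

Lemma continuous_big_sum (I : Type) (r : seq I) (F : I -> R -> R) (t : R) :
  (forall i, continuous (F i) t) -> continuous (fun x => (\sum_(i <- r) F i x)%R) t.
Proof.
move=> cF; elim: r => [|a r IH].
  apply: (continuous_ext (fun _ => 0)); first by move=> x; rewrite big_nil.
  exact: continuous_const.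
apply: (continuous_ext (fun x => plus (F a x) (\sum_(i <- r) F i x)%R)).
  by move=> x; rewrite big_cons.
exact: continuous_plus.
Qed.

Lemma continuous_big_Rmin (I : Type) (r : seq I) (F : I -> R -> R) (t : R) :
  (forall i, continuous (F i) t) ->
  continuous (fun x => \big[Rmin/1]_(i <- r) F i x) t.
Proof.
move=> cF; elim: r => [|a r IH].
  apply: (continuous_ext (fun _ => 1)); first by move=> x; rewrite big_nil.
  exact: continuous_const.
apply: (continuous_ext (fun x => Rmin (F a x) (\big[Rmin/1]_(i <- r) F i x))).
  by move=> x; rewrite big_cons.
exact: continuous_Rmin.
Qed.

Lemma big_Rmin_le (I : eqType) (r : seq I) (F : I -> R) (j : I) :
  j \in r -> \big[Rmin/1]_(i <- r) F i <= F j.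
Proof.
elim: r => [|a r IH] //; rewrite in_cons big_cons => /orP [/eqP ->|jr].
  exact: Rmin_l.
exact: Rle_trans (Rmin_r _ _) (IH jr).
Qed.

Lemma big_Rmin_le0 (I : Type) (r : seq I) (F : I -> R) :
  \big[Rmin/1]_(i <- r) F i <= 0 -> exists i, F i <= 0.
Proof.
elim: r => [|a r IH]; first by rewrite big_nil; lra.
rewrite big_cons /Rmin; case: Rle_dec => [Fa Fa0|_ /IH //].
by exists a; lra.
Qed.

Lemma positive_barrier (I : finType) (v : I -> R -> R) (T : R) :
  (forall i x, continuous (v i) x) -> (forall i, 0 < v i 0) ->
  (forall i t, 0 < t <= T -> (forall j, 0 <= v j t) ->
     (forall j s, 0 <= s < t -> 0 < v j s) -> v i t = 0 ->
     exists2 l, is_derive (v i) t l & 0 < l) ->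
  forall i s, 0 <= s <= T -> 0 < v i s.
Proof.
move=> vc v0 slope i s sT.
pose h x := \big[Rmin/1]_(j <- index_enum I) v j x.
have h_le j x : h x <= v j x by apply: big_Rmin_le; exact: mem_index_enum.
have hc x : continuous h x by apply: continuous_big_Rmin => j; exact: vc.
have h0 : 0 < h 0.
  case: (Rlt_le_dec 0 (h 0)) => // /big_Rmin_le0 [j vj0].
  by have := v0 j; lra.
case: (Rlt_le_dec 0 (v i s)) => // vis_le0.
have [|t [tT ht0 hpos]] := @first_root h T hc h0; first by exists s => //; have := h_le i s; lra.
have [j vjt_le0] := big_Rmin_le0 (Req_le _ _ ht0).
have vjt : v j t = 0 by have := h_le j t; lra.
have vt_ge0 k : 0 <= v k t by rewrite -ht0; exact: h_le.
have v_pos_before k s' : 0 <= s' < t -> 0 < v k s'.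
  by move=> s't; apply: Rlt_le_trans (hpos s' s't) (h_le k s').
have [l dl l_gt0] := slope j t tT vt_ge0 v_pos_before vjt.
suff : l <= 0 by lra.
apply: (is_derive_le0_at_first_root dl vjt (proj1 tT)) => s' s't.
by apply: v_pos_before; lra.
Qed.

Lemma R2E : (2%R : R) = 2.
Proof. by []. Qed.

Lemma Rsum_le (n : nat) (F G : 'I_n -> R) :
  (forall i, F i <= G i) -> (\sum_(i < n) F i)%R <= (\sum_(i < n) G i)%R.
Proof. by move=> FG; apply/RleP; apply: ler_sum => i _; apply/RleP. Qed.

Lemma Rsum_ge0 (n : nat) (F : 'I_n -> R) :
  (forall i, 0 <= F i) -> 0 <= (\sum_(i < n) F i)%R.
Proof. by move=> F0; apply/RleP; apply: sumr_ge0 => i _; apply/RleP. Qed.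

Lemma Rmean_le (n : nat) (F : 'I_n -> R) (c : R) :
  (0 < n)%N -> (forall i, F i <= c) -> / (n%:R)%R * (\sum_(i < n) F i)%R <= c.
Proof.
move=> n0 Fc; have N0 : 0 < (n%:R)%R by apply/RltP; rewrite ltr0n.
have : (\sum_(i < n) F i)%R <= c * (n%:R)%R.
  have -> : c * (n%:R)%R = (\sum_(i < n) c)%R by rewrite RmultE sumr_const card_ord mulr_natr.
  exact: Rsum_le.
move=> sum_le; apply: (Rmult_le_reg_l (n%:R)%R) => //.
by rewrite -Rmult_assoc Rinv_r; lra.
Qed.

Lemma big_ode_rhs (V : comPzRingType) (n : nat) (l u : 'I_n -> V) (g r : V) :
  (\sum_(i < n) (- (2 * g * l i * u i) + 2 * g ^+ 2 * l i * r))%R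
  = (- (2 * g) * (\sum_(i < n) l i * u i) + 2 * g ^+ 2 * r * (\sum_(i < n) l i))%R.
Proof.
rewrite big_split /= sumrN !mulr_sumr; congr (_ + _)%R.
  by rewrite -sumrN; apply: eq_bigr => i _; rewrite mulNr !mulrA.
by apply: eq_bigr => i _; rewrite mulrAC.
Qed.

Lemma scaled_sqr_le (d x M : R) : 0 < d -> Rabs x <= M / sqrt d -> d * (x * x) <= M * M.
Proof.
move=> d0 xM; have sd := sqrt_lt_R0 _ d0.
have : Rabs x * Rabs x <= M / sqrt d * (M / sqrt d).
  by apply: Rmult_le_compat => //; exact: Rabs_pos.
rewrite -Rabs_mult Rabs_right; last by apply: Rle_ge; exact: Rle_0_sqr.
have -> : M / sqrt d * (M / sqrt d) = M * M / d.
  by rewrite -{3}(sqrt_sqrt d); [field|]; lra.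
move=> sqr_le; have := Rmult_le_compat_l d _ _ (Rlt_le _ _ d0) sqr_le.
by have -> : d * (M * M / d) = M * M by field; lra.
Qed.

Lemma ln_le_sub1 (x : R) : 0 < x -> ln x <= x - 1.
Proof. by move=> x0; have := exp_ineq1_le (ln x); rewrite exp_ln //; lra. Qed.

(** * A priori bound from the conserved quantity *)

(* The time derivative of Phi, with A = sum_i l_i D_i, r = R(t), g = gamma_t and
   dG/dt = 2 (S / N) r. *)
Lemma conservation_identity (S A N G eta : R) : 0 < N -> 0 < G ->
  let g := eta / sqrt G in let r := / (2 * N) * A in
  S / N * (/ N * (- (2 * g) * A + 2 * (g * g) * r * S))
  + 4 * eta * (2 * S / N * r / (2 * sqrt G)) - S / N * (eta * eta) * (2 * S / N * r * / G)
  = 0.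
Proof.
move=> N0 G0 /=; have q0 := sqrt_lt_R0 _ G0.
set q := sqrt G in q0 *; have -> : G = q * q by rewrite /q sqrt_sqrt; lra.
by field; lra.
Qed.

Definition adagrad_sqrt_bound (b eta Lam M2 : R) : R :=
  let k := 1 + Lam * M2 / (4 * eta * b) + Lam * eta / b in b * (k * k).

Lemma sqrt_le_adagrad_sqrt_bound (sig Q Q0 G b eta Lam M2 : R) :
  0 < b -> 0 < eta -> 0 <= sig <= Lam -> 0 <= Q -> Q0 <= M2 -> 0 <= M2 -> b * b <= G ->
  sig * Q + 4 * eta * sqrt G - sig * (eta * eta) * ln G
    = sig * Q0 + 4 * eta * b - sig * (eta * eta) * ln (b * b) ->
  sqrt G <= adagrad_sqrt_bound b eta Lam M2.
Proof.
move=> b0 eta0 [sig0 sigL] Q_ge0 Q0M M2_ge0 bG conserved.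
set u := sqrt G in conserved *.
have bu : b <= u by rewrite /u -(sqrt_square b); [apply: sqrt_le_1_alt | lra].
have Gu : G = u * u by rewrite /u sqrt_sqrt; nra.
(* the substitution u = b y^2 turns the logarithmic term into 4 ln y <= 4 y *)
set y := sqrt (u / b).
have ub1 : 1 <= u / b by apply: (Rmult_le_reg_r b) => //; field_simplify; lra.
have yy : y * y = u / b by rewrite /y sqrt_sqrt; lra.
have y1 : 1 <= y by rewrite /y -sqrt_1; apply: sqrt_le_1_alt.
have uy : u = b * (y * y) by rewrite yy; field; lra.
have ln_ratio : ln G - ln (b * b) = 4 * ln y.
  rewrite Gu uy !ln_mult; try nra; lra.
have lny : 0 <= ln y <= y.
  split; last by have := @ln_le_sub1 y ltac:(lra); lra.
  by rewrite -ln_1; case: y1 => [y1|<-]; [left; apply: ln_increasing|]; lra.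
have key : 4 * eta * b * (y * y) <= Lam * M2 + 4 * eta * b + 4 * Lam * (eta * eta) * y.
  have : sig * Q0 <= Lam * M2.
    by apply: Rle_trans (Rmult_le_compat_r _ _ _ M2_ge0 sigL); nra.
  have : sig * (eta * eta) * (4 * ln y) <= Lam * (eta * eta) * (4 * y).
    by apply: Rmult_le_compat; nra.
  have : 0 <= sig * Q by nra.
  have : 4 * eta * u = 4 * eta * b * (y * y) by rewrite uy; ring.
  have : sig * (eta * eta) * (ln G - ln (b * b)) = sig * (eta * eta) * (4 * ln y).
    by rewrite ln_ratio.
  lra.
rewrite /adagrad_sqrt_bound uy.
set a := 1 + Lam * M2 / (4 * eta * b); set be := Lam * eta / b.
have a1 : 1 <= a.
  have : 0 <= Lam * M2 / (4 * eta * b) by apply: Rle_mult_inv_pos; nra.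
  rewrite /a; lra.

have be0 : 0 <= be by apply: Rle_mult_inv_pos; nra.
have aE : 4 * eta * b * a = Lam * M2 + 4 * eta * b by rewrite /a; field; lra.
have beE : 4 * eta * b * be = 4 * Lam * (eta * eta) by rewrite /be; field; lra.
have y_le : y <= a + be.
  case: (Rle_dec y (a + be)) => // /Rnot_le_lt y_gt.
  have : 4 * eta * b * ((a + be) * y) < 4 * eta * b * (y * y).
    by apply: Rmult_lt_compat_l; nra.
  have : 4 * eta * b * a * 1 <= 4 * eta * b * a * y by apply: Rmult_le_compat_l; nra.
  have : 4 * eta * b * be * y = 4 * Lam * (eta * eta) * y by rewrite -beE.
  lra.
apply: Rmult_le_compat_l; first lra.
apply: Rmult_le_compat; lra.
Qed.

Lemma adagrad_sqrt_bound_ge (b eta Lam M2 : R) : 0 < b -> 0 < eta -> 0 <= Lam -> 0 <= M2 ->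
  b <= adagrad_sqrt_bound b eta Lam M2.
Proof.
move=> b0 eta0 Lam0 M20; rewrite /adagrad_sqrt_bound /=.
have : 0 <= Lam * M2 / (4 * eta * b) by apply: Rle_mult_inv_pos; nra.
have : 0 <= Lam * eta / b by apply: Rle_mult_inv_pos; nra.
set k := _ + _ + _ => ? ?.
have k1 : 1 <= k by rewrite /k; lra.
rewrite -{1}(Rmult_1_r b); apply: Rmult_le_compat_l; [lra | nra].
Qed.

Definition adagrad_lr_floor (b eta Lam M2 : R) : R :=
  eta / (2 * adagrad_sqrt_bound b eta Lam M2).

Lemma adagrad_lr_floor_gt0 (b eta Lam M2 : R) : 0 < b -> 0 < eta -> 0 <= Lam -> 0 <= M2 ->
  0 < adagrad_lr_floor b eta Lam M2.
Proof.
move=> b0 eta0 Lam0 M20; apply: Rdiv_lt_0_compat => //.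
by have := adagrad_sqrt_bound_ge b0 eta0 Lam0 M20; lra.
Qed.

(** * The AdaGrad-Norm ODE *)

Section AdaGradNormODE.

Variables (n : nat) (K : 'M[R]_n) (l : 'I_n -> R) (D : 'I_n -> R -> R) (b eta : R).

Hypothesis n_gt0 : (0 < n)%N.
Hypothesis l_ge0 : forall i, 0 <= l i.

Let S : R := (\sum_(i < n) l i)%R.
Let N : R := (n%:R)%R.

Lemma nR_gt0 : 0 < N.
Proof. by apply/RltP; rewrite ltr0n. Qed.

Lemma sum_l_ge0 : 0 <= S.
Proof. exact: Rsum_ge0. Qed.

Lemma risk_ge (E : 'I_n -> R -> R) (t x : R) :
  (forall i, x <= E i t) -> S * x / (2 * N) <= risk l E t.
Proof.
move=> Ex; have N0 := nR_gt0.
have -> : risk l E t = / (2 * N) * (\sum_(i < n) l i * E i t)%R by [].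
have -> : S * x = (\sum_(i < n) l i * x)%R by rewrite /S RmultE mulr_suml.
rewrite /Rdiv (Rmult_comm _ (/ _)); apply: Rmult_le_compat_l; first by left; apply: Rinv_pos; lra.
by apply: Rsum_le => i; apply: Rmult_le_compat_l.
Qed.

Lemma continuous_risk (E : 'I_n -> R -> R) (x : R) :
  (forall i, continuous (E i) x) -> continuous (risk l E) x.
Proof.
move=> cE; apply: (continuous_scal_r ((2 * N)^-1)%R).
by apply: continuous_big_sum => i; apply: continuous_scal_r.
Qed.

Hypothesis b_gt0 : 0 < b.
Hypothesis eta_gt0 : 0 < eta.
Hypothesis trK : (\tr K)%R = S.
Hypothesis D0_ge0 : forall i, 0 <= D i 0.
Hypothesis D_right0 : forall i, filterlim (D i) (at_right 0) (locally (D i 0)).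

Let gam (t : R) : R := adagrad_lr b eta K (risk l D) t.

Hypothesis D_ode : forall i t, 0 < t ->
  is_derive (D i) t (- (2 * gam t * l i * D i t) + 2 * gam t ^+ 2 * l i * risk l D t)%R.

Let G (t : R) : R := b * b + 2 * S / N * RInt (risk l D) 0 t.

Lemma gamE (t : R) : gam t = eta / sqrt (G t).
Proof. by rewrite /gam /adagrad_lr trK expr2. Qed.

Lemma gam_sqr_le (t : R) : b * b / 2 <= G t -> gam t * gam t <= 2 * (eta * eta) / (b * b).
Proof.
move=> Gt; rewrite gamE.
have G0 : 0 < G t by nra.
have sG := sqrt_lt_R0 _ G0.
have -> : eta / sqrt (G t) * (eta / sqrt (G t)) = eta * eta / G t.
  by rewrite -{3}(sqrt_sqrt (G t)); [field|]; lra.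
have -> : 2 * (eta * eta) / (b * b) = eta * eta * / (b * b / 2) by field; lra.
by apply: Rmult_le_compat_l; [nra | apply: Rinv_le_contravar => //; nra].
Qed.

Let Dx (i : 'I_n) : R -> R := extend0 (D i).
Let Rx : R -> R := risk l Dx.

Lemma continuous_Dx (i : 'I_n) (x : R) : continuous (Dx i) x.
Proof.
apply: continuous_extend0 => // t t0.
by apply: ex_derive_continuous; eexists; exact: D_ode.
Qed.

Lemma continuous_Rx (x : R) : continuous Rx x.
Proof. by apply: continuous_risk => i; exact: continuous_Dx. Qed.

Lemma ex_RInt_Rx (x y : R) : ex_RInt Rx x y.
Proof. by apply: ex_RInt_continuous => z _; exact: continuous_Rx. Qed.

Lemma RxE (x : R) : 0 <= x -> Rx x = risk l D x.
Proof.
by move=> x0; rewrite /Rx /risk; congr (_ * _)%R; apply: eq_bigr => i _; rewrite /Dx extend0E.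
Qed.

Lemma RInt_risk_Dx (t : R) : 0 <= t -> RInt (risk l D) 0 t = RInt Rx 0 t.
Proof.
move=> t0; apply: RInt_ext => x; rewrite Rmin_left // Rmax_right // => x0t.
by rewrite RxE //; lra.
Qed.

Lemma l_le_sum (i : 'I_n) : l i <= S.
Proof.
apply/RleP; rewrite /S (bigD1 i) //= lerDl.
by apply: sumr_ge0 => j _; apply/RleP.
Qed.

Lemma G_ge (t F : R) : 0 <= t -> (forall j s, 0 < s < t -> - F <= D j s) ->
  b * b - S * S / (N * N) * t * F <= G t.
Proof.
move=> t0 DF; have N0 := nR_gt0; have S0 := sum_l_ge0.
have Rx_ge s : 0 < s < t -> S * - F / (2 * N) <= Rx s.
  by move=> st; apply: risk_ge => j; rewrite /Dx extend0E; [exact: DF | lra].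
have Ib : t * (S * - F / (2 * N)) <= RInt Rx 0 t.
  have := RInt_const 0 t (S * - F / (2 * N)).
  rewrite /scal /= /mult /= Rminus_0_r => <-.
  by apply: RInt_le => //; [apply: ex_RInt_const | exact: ex_RInt_Rx].
have c0 : 0 <= 2 * S / N by apply: Rle_mult_inv_pos; lra.
have := Rmult_le_compat_l _ _ _ c0 Ib.
have -> : 2 * S / N * (t * (S * - F / (2 * N))) = - (S * S / (N * N) * t * F).
  by field; lra.
by rewrite /G RInt_risk_Dx //; lra.
Qed.

Let kap : R := 2 * (eta * eta) / (b * b) * S * S / N + 1.

Lemma kap_ge1 : 1 <= kap.
Proof.
have S0 := sum_l_ge0.
have g0 : 0 <= 2 * (eta * eta) / (b * b) by apply: Rle_mult_inv_pos; nra.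
have : 0 <= 2 * (eta * eta) / (b * b) * S * S / N.
  by apply: Rle_mult_inv_pos; [apply: Rmult_le_pos; [apply: Rmult_le_pos|] | exact: nR_gt0].
by rewrite /kap; lra.
Qed.

(* [kap] dominates the worst case of the forcing term when all [D j t >= - E]:
   [2 gam^2 l_i R >= - (2 eta^2 / b^2) S^2 E / N]. *)
Lemma barrier_slope_pos (t E : R) (i : 'I_n) : 0 < t -> 0 < E ->
  b * b / 2 <= G t -> (forall j, - E <= D j t) -> D i t = - E ->
  0 < (- (2 * gam t * l i * D i t) + 2 * gam t ^+ 2 * l i * risk l D t)%R + kap * E.
Proof.
move=> t0 E0 Gt DE DiE; have N0 := nR_gt0; have S0 := sum_l_ge0.
have g_ge0 : 0 <= gam t.
  by rewrite gamE; apply: Rle_mult_inv_pos; [lra | apply: sqrt_lt_R0; nra].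
have g2 := gam_sqr_le Gt.
have risk_lb : S * - E / (2 * N) <= risk l D t by exact: risk_ge.
have li := l_le_sum i; have li0 := l_ge0 i.
move: g_ge0 g2; rewrite expr2 -!RmultE -!RplusE -RoppE DiE /kap.
set g := gam t; set r := risk l D t; set g2max := 2 * (eta * eta) / (b * b) => g0 g2.
have : g * g * l i * (S * - E / (2 * N)) <= g * g * l i * r.
  by apply: Rmult_le_compat_l; [apply: Rmult_le_pos; nra | exact: risk_lb].
have : g * g * l i * (S * E / (2 * N)) <= g2max * S * (S * E / (2 * N)).
  apply: Rmult_le_compat_r; first by apply: Rle_mult_inv_pos; nra.
  by apply: Rmult_le_compat; nra.
have : 0 <= g * l i * E by apply: Rmult_le_pos; [apply: Rmult_le_pos | ]; lra.
have : g2max * S * S / N * E = 2 * (g2max * S * (S * E / (2 * N))) by field; lra.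
have : g * g * l i * (S * - E / (2 * N)) = - (g * g * l i * (S * E / (2 * N))) by field; lra.
by rewrite !R2E; lra.
Qed.

Lemma G_ge_half (T eps t : R) : 0 < eps ->
  eps * (S * S / (N * N) * T * exp (kap * T)) <= b * b / 2 -> 0 < t <= T ->
  (forall j s, 0 < s < t -> 0 < D j s + eps * exp (kap * s)) -> b * b / 2 <= G t.
Proof.
move=> eps0 small tT above; set F := eps * exp (kap * T).
have F0 : 0 < F by apply: Rmult_lt_0_compat => //; exact: exp_pos.
have kap0 : 0 < kap by have := kap_ge1; lra.
have D_ge_F j s : 0 < s < t -> - F <= D j s.
  move=> st; have := above j s st.
  have : exp (kap * s) < exp (kap * T).
    by apply: exp_increasing; apply: Rmult_lt_compat_l; lra.
  by rewrite /F; nra.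
have := G_ge (Rlt_le _ _ (proj1 tT)) D_ge_F.
have c0 : 0 <= S * S / (N * N) by apply: Rle_mult_inv_pos; have := nR_gt0; nra.
have : S * S / (N * N) * t * F <= S * S / (N * N) * T * F.
  by apply: Rmult_le_compat_r; [lra | apply: Rmult_le_compat_l; lra].
have : S * S / (N * N) * T * F = eps * (S * S / (N * N) * T * exp (kap * T)).
  by rewrite /F; ring.
lra.
Qed.

Lemma D_barrier (T eps : R) : 0 < eps ->
  eps * (S * S / (N * N) * T * exp (kap * T)) <= b * b / 2 ->
  forall i s, 0 <= s <= T -> 0 < D i s + eps * exp (kap * s).
Proof.
move=> eps0 small i s sT.
pose v j x := Dx j x + eps * exp (kap * x).
have vE j x : 0 <= x -> v j x = D j x + eps * exp (kap * x).
  by move=> x0; rewrite /v /Dx extend0E.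
rewrite -vE; last lra.
apply: (@positive_barrier _ v T) => // [j x | j | j t tT vt_ge0 v_before vjt0].
- apply: (continuous_plus (Dx j) (fun x => eps * exp (kap * x))); first exact: continuous_Dx.
  by apply: ex_derive_continuous; auto_derive.
- by rewrite vE; [have := D0_ge0 j; have := exp_pos (kap * 0); nra | lra].
have t0 : 0 < t by case: tT.
set E := eps * exp (kap * t).
have E0 : 0 < E by apply: Rmult_lt_0_compat => //; exact: exp_pos.
have DjE : D j t = - E by move: vjt0; rewrite vE -/E; lra.
have D_ge k : - E <= D k t by have := vt_ge0 k; rewrite vE -/E; lra.
have Gt : b * b / 2 <= G t.
  by apply: (G_ge_half eps0 small tT) => k s' s't; rewrite -vE; [apply: v_before|]; lra.
exists ((- (2 * gam t * l j * D j t) + 2 * gam t ^+ 2 * l j * risk l D t)%R + kap * E).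
  apply: is_derive_plus; first exact: is_derive_extend0 (D_ode j t0).
  by auto_derive => //; rewrite /E; ring.
exact: barrier_slope_pos.
Qed.

(* If [D i t < 0], a barrier admissible for [D_barrier] that lies above [D i t] at time
   [t] gives a contradiction. *)
Lemma D_ge0 (i : 'I_n) (t : R) : 0 <= t -> 0 <= D i t.
Proof.
move=> t0; case: (Rle_dec 0 (D i t)) => // /Rnot_le_lt Dit.
pose W := S * S / (N * N) * t * exp (kap * t).
have W0 : 0 <= W.
  have : 0 <= S * S / (N * N) by apply: Rle_mult_inv_pos; have := nR_gt0; nra.
  by have := exp_pos (kap * t); rewrite /W => ? ?; apply: Rmult_le_pos; nra.
have ekt := exp_pos (kap * t).
pose eps := Rmin (b * b / (2 * (W + 1))) (- D i t / (2 * exp (kap * t))).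
have eps0 : 0 < eps.
  by apply: Rmin_glb_lt; apply: Rdiv_lt_0_compat; nra.
have small : eps * W <= b * b / 2.
  have : eps * W <= b * b / (2 * (W + 1)) * W by apply: Rmult_le_compat_r => //; exact: Rmin_l.
  have : b * b / (2 * (W + 1)) * W <= b * b / 2.
    apply: (Rmult_le_reg_r (2 * (W + 1))); first lra.
    by field_simplify; nra.
  lra.
have := D_barrier eps0 small i (conj t0 (Rle_refl t)).
have : eps * exp (kap * t) <= - D i t / 2.
  have := Rmin_r (b * b / (2 * (W + 1))) (- D i t / (2 * exp (kap * t))).
  rewrite -/eps => eps_le.
  have := Rmult_le_compat_r _ _ _ (Rlt_le _ _ ekt) eps_le.
  by have -> : - D i t / (2 * exp (kap * t)) * exp (kap * t) = - D i t / 2 by field; lra.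
lra.
Qed.

Let I (s : R) : R := RInt Rx 0 s.
Let GI (s : R) : R := b * b + 2 * S / N * I s.
Let Gx : R -> R := extend0 GI.
Let Q (s : R) : R := / N * (\sum_(i < n) Dx i s)%R.
Let Phi (s : R) : R :=
  S / N * Q s + 4 * eta * sqrt (Gx s) - S / N * (eta * eta) * ln (Gx s).

Lemma Rx_ge0 (x : R) : 0 <= Rx x.
Proof.
have := @risk_ge Dx x 0 (fun i => D_ge0 i (Rmax_r x 0)).
by rewrite Rmult_0_r /Rdiv Rmult_0_l.
Qed.

Lemma is_derive_I (x : R) : is_derive I x (Rx x).
Proof.
apply: is_derive_RInt; last exact: continuous_Rx.
by apply: filter_forall => y; apply: RInt_correct; exact: ex_RInt_Rx.
Qed.

Lemma is_derive_GI (x : R) : is_derive GI x (2 * S / N * Rx x).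
Proof.
have := is_derive_plus _ _ x _ _ (is_derive_const (b * b) x)
  (is_derive_scal _ x (2 * S / N) _ (is_derive_I x)).
by rewrite /plus /zero /=; rewrite Rplus_0_l.
Qed.

Lemma Gx_ge (x : R) : b * b <= Gx x.
Proof.
have I0 : 0 <= I (Rmax x 0).
  apply: RInt_ge_0; [exact: Rmax_r | exact: ex_RInt_Rx | move=> y _; exact: Rx_ge0].
have c0 : 0 <= 2 * S / N by apply: Rle_mult_inv_pos; [have := sum_l_ge0 | exact: nR_gt0]; lra.
by rewrite /Gx /extend0 /GI; have := Rmult_le_pos _ _ c0 I0; lra.
Qed.

Lemma continuous_Gx (x : R) : continuous Gx x.
Proof.
have cG y : continuous GI y.
  by apply: ex_derive_continuous; eexists; exact: is_derive_GI.
apply: continuous_extend0 => [|t _]; last exact: cG.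
exact: filterlim_filter_le_1 (filter_le_within _) (cG 0).
Qed.

Lemma continuity_Phi (x : R) : continuity_pt Phi x.
Proof.
have G0 : 0 < Gx x by have := Gx_ge x; nra.
apply/continuity_pt_filterlim.
apply: continuous_minus; first apply: continuous_plus.
- apply: continuous_scal_r; apply: continuous_scal_r.
  by apply: continuous_big_sum => i; exact: continuous_Dx.
- apply: continuous_scal_r; apply: continuous_comp; first exact: continuous_Gx.
  by apply/continuity_pt_filterlim; apply: continuity_pt_sqrt; lra.
- apply: continuous_scal_r; apply: continuous_comp; first exact: continuous_Gx.
  by apply: ex_derive_continuous; eexists; exact: is_derive_ln.
Qed.

Lemma GxE (x : R) : 0 <= x -> Gx x = G x.
Proof. by move=> x0; rewrite /Gx extend0E // /GI /I -RInt_risk_Dx. Qed.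

Lemma is_derive_Phi (x : R) : 0 < x -> is_derive Phi x 0.
Proof.
move=> x0; have N0 := nR_gt0.
have G0 : 0 < Gx x by have := Gx_ge x; nra.
have dG : is_derive Gx x (2 * S / N * Rx x).
  by apply: is_derive_extend0 => //; exact: is_derive_GI.
pose dD i := (- (2 * gam x * l i * D i x) + 2 * gam x ^+ 2 * l i * risk l D x)%R.
have dQ : is_derive Q x (/ N * (\sum_(i < n) dD i)%R).
  apply: is_derive_scal; apply: is_derive_big_sum => i.
  by apply: is_derive_extend0 => //; exact: D_ode.
have dln : is_derive (fun s => ln (Gx s)) x (2 * S / N * Rx x * / Gx x).
  have := is_derive_comp _ _ _ _ _ (is_derive_ln _ G0) dG.
  by rewrite /scal /= /mult /=.
have dPhi := is_derive_minus _ _ _ _ _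
  (is_derive_plus _ _ _ _ _ (is_derive_scal _ _ (S / N) _ dQ)
     (is_derive_scal _ _ (4 * eta) _ (is_derive_sqrt _ _ _ dG G0)))
  (is_derive_scal _ _ (S / N * (eta * eta)) _ dln).
apply: (eq_ind _ (is_derive Phi x) dPhi).
rewrite /minus /plus /= /dD big_ode_rhs RxE ?gamE -?GxE; try lra.
have /= id0 := conservation_identity S (\sum_(i < n) l i * D i x)%R eta N0 G0.
exact: eq_trans id0.
Qed.

Lemma conservation (t : R) : 0 < t ->
  S / N * (/ N * (\sum_(i < n) D i t)%R) + 4 * eta * sqrt (G t)
    - S / N * (eta * eta) * ln (G t)
  = S / N * (/ N * (\sum_(i < n) D i 0)%R) + 4 * eta * b
    - S / N * (eta * eta) * ln (b * b).
Proof.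
move=> t0.
have [_ [_ Phi_t]] : exists s, 0 <= s <= t /\ Phi t - Phi 0 = 0 * (t - 0).
  have := MVT_gen Phi 0 t (fun _ => 0); rewrite /= Rmin_left ?Rmax_right; try lra.
  by apply=> [x x0t | x _]; [apply: is_derive_Phi; lra | exact: continuity_Phi].
have QE u : 0 <= u -> Q u = / N * (\sum_(i < n) D i u)%R.
  by move=> u0; rewrite /Q; congr (_ * _); apply: eq_bigr => i _; rewrite /Dx extend0E.
have Gx0 : Gx 0 = b * b by rewrite GxE; [rewrite /G RInt_point /zero /=; ring | lra].
move: Phi_t; rewrite /Phi Gx0 GxE ?QE ?sqrt_square; lra.
Qed.

Lemma adagrad_lr_floor_lt (Lam M2 : R) : (forall i, l i <= Lam) -> (forall i, D i 0 <= M2) ->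
  forall t, 0 < t -> adagrad_lr_floor b eta Lam M2 < gam t.
Proof.
move=> l_le D0_le t t0; have N0 := nR_gt0.
have sig : 0 <= S / N <= Lam.
  split; first by apply: Rle_mult_inv_pos => //; exact: sum_l_ge0.
  by rewrite /Rdiv Rmult_comm; exact: Rmean_le.
have Q0 : 0 <= / N * (\sum_(i < n) D i t)%R.
  by apply: Rmult_le_pos; [left; apply: Rinv_pos | apply: Rsum_ge0 => i; apply: D_ge0]; lra.
have M20 : 0 <= M2 by apply: Rle_trans (D0_ge0 (Ordinal n_gt0)) (D0_le _).
have bG : b * b <= G t by rewrite -GxE; [exact: Gx_ge | lra].
have sqrt_le := sqrt_le_adagrad_sqrt_bound b_gt0 eta_gt0 sig Q0 (Rmean_le n_gt0 D0_le) M20 bG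
  (conservation t0).
have sG : 0 < sqrt (G t) by apply: sqrt_lt_R0; nra.
rewrite gamE /adagrad_lr_floor; apply: Rmult_lt_compat_l => //.
by apply: Rinv_lt_contravar; nra.
Qed.

End AdaGradNormODE.

Close Scope R_scope.
Local Open Scope ring_scope.

(** * Orthonormal eigenbases *)

Lemma mulmx_tr_eigen (F : comPzRingType) (d : nat) (K Om : 'M[F]_d) (lam : 'I_d -> F) :
  (forall i, K *m (row i Om)^T = lam i *: (row i Om)^T) ->
  forall k j, (K *m Om^T) k j = lam j * Om j k.
Proof.
move=> eigen k j; have := congr1 (fun v : 'cV[F]_d => v k 0) (eigen j).
by rewrite !mxE => <-; apply: eq_bigr => m _; rewrite !mxE.
Qed.

Lemma mxtrace_eigen (F : comPzRingType) (d : nat) (K Om : 'M[F]_d) (lam : 'I_d -> F) :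
  Om *m Om^T = 1%:M -> (forall i, K *m (row i Om)^T = lam i *: (row i Om)^T) ->
  \tr K = \sum_(i < d) lam i.
Proof.
move=> orth eigen.
have -> : K = K *m Om^T *m Om by rewrite -mulmxA (mulmx1C orth) mulmx1.
rewrite mxtrace_mulC /mxtrace; apply: eq_bigr => i _; rewrite mxE.
have := congr1 (fun M : 'M[F]_d => M i i) orth; rewrite !mxE eqxx mulr1n => rowi1.
rewrite -[RHS]mulr1 -rowi1 mulr_sumr; apply: eq_bigr => k _.
by rewrite (mulmx_tr_eigen eigen) !mxE mulrCA.
Qed.

Lemma eigen_norm_le (F : realDomainType) (d : nat) (K Om : 'M[F]_d) (lam : 'I_d -> F) (L : F) :
  Om *m Om^T = 1%:M -> (forall i, K *m (row i Om)^T = lam i *: (row i Om)^T) ->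
  (forall v : 'cV[F]_d, ((K *m v)^T *m (K *m v)) 0 0 <= L ^+ 2 * (v^T *m v) 0 0) ->
  forall i, `|lam i| <= `|L|.
Proof.
move=> orth eigen K_bounded i; have := K_bounded (row i Om)^T; rewrite eigen trmxK.
have unit_row : (row i Om *m (row i Om)^T) 0 0 = 1.
  have := congr1 (fun M : 'M[F]_d => M i i) orth; rewrite !mxE eqxx mulr1n => <-.
  by apply: eq_bigr => k _; rewrite !mxE.
have -> : ((lam i *: (row i Om)^T)^T *m (lam i *: (row i Om)^T)) 0 0 = lam i ^+ 2.
  rewrite -[RHS]mulr1 -unit_row !mxE mulr_sumr; apply: eq_bigr => k _.
  by rewrite !mxE expr2 mulrACA.
rewrite unit_row !mulr1 => lam_sqr_le.
by rewrite -ler_sqr ?nnegrE ?normr_ge0 // !real_normK ?num_real.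
Qed.

Theorem proposition4
  (b eta : R)
  (K : forall d : nat, 'M[R]_d)
  (lam : forall d : nat, 'I_d -> R)
  (Om : forall d : nat, 'M[R]_d)
  (Xstar X0 : forall d : nat, 'cV[R]_d)
  (D2 : forall d : nat, 'I_d -> R -> R) :
  0 < b -> 0 < eta ->
  (* (lam d i, i-th row of Om d) is an orthonormal eigenbasis of K d; K d is PSD *)
  (forall d, Om d *m (Om d)^T = 1%:M) ->
  (forall d (i : 'I_d), K d *m (row i (Om d))^T = lam d i *: (row i (Om d))^T) ->
  (forall d (i : 'I_d), 0 <= lam d i) ->
  (* ||K||_op bounded independently of d *)
  (exists L : R, forall d (v : 'cV[R]_d),
      ((K d *m v)^T *m (K d *m v)) ord0 ord0 <= L ^+ 2 * (v^T *m v) ord0 ord0) ->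
  (* the number of eigenvalues below C is o(d) *)
  (exists C : R, 0 < C /\
     forall eps : R, 0 < eps -> exists d0 : nat, forall d : nat, (d0 <= d)%N ->
       (#|[set i : 'I_d | lam d i < C]|)%:R <= eps * d%:R) ->
  (* <X*, omega_i> = O(d^{-1/2}) uniformly in i *)
  (exists (M : R) (d0 : nat), forall d : nat, (d0 <= d)%N -> forall i : 'I_d,
       `|eig_coord (Om d) (Xstar d) i| <= M / sqrt d%:R) ->
  (* X_0 = 0 *)
  (forall d, X0 d = 0) ->
  (* initial condition D_i^2(0) = d <X_0 - X*, omega_i>^2 *)
  (forall d (i : 'I_d), D2 d i 0 = d%:R * (eig_coord (Om d) (X0 d - Xstar d) i) ^+ 2) ->
  (* D_i^2 is continuous from the right at 0 *)
  (forall d (i : 'I_d), filterlim (D2 d i) (at_right 0) (locally (D2 d i 0))) ->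
  (* the ODE for t > 0 *)
  (forall d (i : 'I_d) (t : R), 0 < t ->
     is_derive (D2 d i) t
       (- (2 * adagrad_lr b eta (K d) (risk (lam d) (D2 d)) t * lam d i * D2 d i t)
        + 2 * (adagrad_lr b eta (K d) (risk (lam d) (D2 d)) t) ^+ 2 * lam d i
            * risk (lam d) (D2 d) t)) ->
  exists gt : R, 0 < gt /\
    exists d0 : nat, forall d : nat, (d0 <= d)%N -> forall t : R, 0 < t ->
      gt < adagrad_lr b eta (K d) (risk (lam d) (D2 d)) t.
Proof.
move=> /RltP b0 /RltP eta0 orth eigen lam_ge0 [L K_bounded] _ [M [d1 Xstar_small]]
  X0_0 D_init D_right D_ode.
exists (adagrad_lr_floor b eta `|L| (M * M)); split.
  by apply/RltP; apply: adagrad_lr_floor_gt0 => //; [exact/RleP/normr_ge0 | exact: Rle_0_sqr].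
exists (maxn d1 1) => d d_ge t /RltP t0.
have d_gt0 : (0 < d)%N by apply: leq_trans d_ge; exact: leq_maxr.
have D_initE i : D2 d i 0 = d%:R * eig_coord (Om d) (Xstar d) i ^+ 2.
  by rewrite D_init X0_0 sub0r /eig_coord mulmxN mxE sqrrN.
have lam_le i : Rle (lam d i) `|L|.
  apply: Rle_trans (Rle_abs _) _; apply/RleP.
  exact: eigen_norm_le (orth d) (eigen d) (K_bounded d) i.
have D0_le i : Rle (D2 d i 0) (M * M).
  rewrite D_initE; apply: scaled_sqr_le; first by apply/RltP; rewrite ltr0n.
  by apply/RleP; apply: Xstar_small; apply: leq_trans d_ge; exact: leq_maxl.
have D0_ge0 i : Rle 0 (D2 d i 0) by apply/RleP; rewrite D_initE mulr_ge0 ?sqr_ge0.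
apply/RltP; apply: (adagrad_lr_floor_lt d_gt0 _ b0 eta0 (mxtrace_eigen (orth d) (eigen d))
  D0_ge0 (D_right d) _ lam_le D0_le t0) => [i | i s /RltP s0]; first exact/RleP.
exact: D_ode.
Qed.
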